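(* Let $G$ be a disconnected skew graph with table $T$. Then the non-empty boxes of $T$ form one of the following four patterns: (1) pattern $\boxplus$: there are exactly four non-empty boxes, located at $(i_1,j_1),(i_1,j_2),(i_2,j_1),(i_2,j_2)$ for some $i_1\ne i_2$ and $j_1\ne j_2$; (2) pattern $\mathcal{R}$: all non-empty boxes lie in a single row; (3) pattern $\mathcal{C}$: all non-empty boxes lie in a single column; (4) pattern $\mathcal{R}\cup\mathcal{C}$: all non-empty boxes lie in the union of one row $R$ and one column $C$, where $V(R)\not\subseteq V(C)$ and $V(C)\not\subseteq V(R)$.
   Context: A skew graph is defined from a table $T$ with $m$ rows and $n$ columns whose box $(i,j)$ contains a non-negative integer $t_{ij}$: place $t_{ij}$ distinct vertices in box $(i,j)$, and join two vertices by an edge if and only if their boxes lie in different rows and in different columns (vertices in the same row, same column, or same box are non-adjacent). Equivalently, skew graphs are exactly the complements of line graphs of bipartite multigraphs. A box is non-empty if it contains at least one vertex. For a row $R$ (resp. column $C$) of $T$, $V(R)$ (resp. $V(C)$) is the set of vertices located in boxes of that row (resp. column). *)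

From mathcomp Require Import all_boot.
Unset Printing Implicit Defensive.

(* A table T with m rows and n columns: box (i,j) contains t i j vertices. *)
Definition skew_vertex {m n : nat} (t : 'I_m -> 'I_n -> nat) : finType :=
  {p : 'I_m * 'I_n & 'I_(t p.1 p.2)}.

Definition vrow {m n} {t : 'I_m -> 'I_n -> nat} (v : skew_vertex t) : 'I_m := (tag v).1.
Definition vcol {m n} {t : 'I_m -> 'I_n -> nat} (v : skew_vertex t) : 'I_n := (tag v).2.

Definition skew_adj {m n} (t : 'I_m -> 'I_n -> nat) : rel (skew_vertex t) :=
  fun u v => (vrow u != vrow v) && (vcol u != vcol v).

Definition skew_disconnected {m n} (t : 'I_m -> 'I_n -> nat) : Prop :=
  exists u v : skew_vertex t, ~~ connect (skew_adj t) u v.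

Definition VR {m n} (t : 'I_m -> 'I_n -> nat) (r : 'I_m) : {set skew_vertex t} :=
  [set v | vrow v == r].
Definition VC {m n} (t : 'I_m -> 'I_n -> nat) (c : 'I_n) : {set skew_vertex t} :=
  [set v | vcol v == c].

Definition nonempty_box {m n} (t : 'I_m -> 'I_n -> nat) i j : bool := 0 < t i j.

Definition pattern_square {m n} (t : 'I_m -> 'I_n -> nat) : Prop :=
  exists i1 i2 j1 j2, i1 != i2 /\ j1 != j2 /\
    forall i j, nonempty_box t i j <-> ((i == i1) || (i == i2)) && ((j == j1) || (j == j2)).

Definition pattern_R {m n} (t : 'I_m -> 'I_n -> nat) : Prop :=
  exists r, forall i j, nonempty_box t i j -> i = r.

Definition pattern_C {m n} (t : 'I_m -> 'I_n -> nat) : Prop :=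
  exists c, forall i j, nonempty_box t i j -> j = c.

Definition pattern_RC {m n} (t : 'I_m -> 'I_n -> nat) : Prop :=
  exists r c, (forall i j, nonempty_box t i j -> i = r \/ j = c) /\
    ~~ (VR t r \subset VC t c) /\ ~~ (VC t c \subset VR t r).

From mathcomp Require Import all_boot.

Set Implicit Arguments.
Unset Strict Implicit.

(** If two vertices u, v are not joined by a path they are not adjacent, so
   (up to transposing the table) they lie in a common row a, in columns b and
   d.  A vertex outside row a and outside columns b, d would be a common
   neighbour of u and v, so every non-empty box off row a lies in column b or
   column d.  When b <> d, two non-empty boxes (i, b) and (i', d) off row a
   with i <> i' would give the path u - (i', d) - (i, b) - v, and a non-empty
   box (a, j) with j outside {b, d} would give the path
   u - (i, d) - (a, j) - (i, b) - v.  Hence either the non-empty boxes fill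
   the square {a, i} x {b, d}, or they all lie in the union of one row and one
   column, which yields one of the patterns R, C or R u C. *)

Lemma homo_connect (T T' : finType) (e : rel T) (e' : rel T') (f : T -> T') :
  {homo f : x y / e x y >-> e' x y} ->
  {homo f : x y / connect e x y >-> connect e' x y}.
Proof.
move=> fh x y /connectP[p ep ->]; apply/connectP.
by exists (map f p); [exact: homo_path fh ep | rewrite last_map].
Qed.

Definition skew_patterns m n (t : 'I_m -> 'I_n -> nat) : Prop :=
  pattern_square t \/ pattern_R t \/ pattern_C t \/ pattern_RC t.

Section Boxes.
Variables (m n : nat) (t : 'I_m -> 'I_n -> nat).

Definition box_vertex i j (h : nonempty_box t i j) : skew_vertex t :=
  existT (fun p : 'I_m * 'I_n => 'I_(t p.1 p.2)) (i, j) (Ordinal h).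

Lemma box_vertex_row i j (h : nonempty_box t i j) : vrow (box_vertex h) = i.
Proof. by []. Qed.

Lemma box_vertex_col i j (h : nonempty_box t i j) : vcol (box_vertex h) = j.
Proof. by []. Qed.

Lemma vertex_box_nonempty (x : skew_vertex t) : nonempty_box t (vrow x) (vcol x).
Proof. by case: x => [[i j] k]; apply: leq_ltn_trans (ltn_ord k). Qed.

Lemma VR_subsetP r c :
  reflect (forall j, nonempty_box t r j -> j = c) (VR t r \subset VC t c).
Proof.
apply: (iffP subsetP) => [sub j h | row_c x].
  by have := sub (box_vertex h); rewrite !inE => /(_ (eqxx r))/eqP.
rewrite !inE => /eqP row_x.
by rewrite (row_c (vcol x)) // -row_x vertex_box_nonempty.
Qed.

Lemma VC_subsetP r c :
  reflect (forall i, nonempty_box t i c -> i = r) (VC t c \subset VR t r).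
Proof.
apply: (iffP subsetP) => [sub i h | col_r x].
  by have := sub (box_vertex h); rewrite !inE => /(_ (eqxx c))/eqP.
rewrite !inE => /eqP col_x.
by rewrite (col_r (vrow x)) // -col_x vertex_box_nonempty.
Qed.

Lemma cross_patterns r c :
  (forall i j, nonempty_box t i j -> i = r \/ j = c) ->
  pattern_R t \/ pattern_C t \/ pattern_RC t.
Proof.
move=> cross.
have [/VC_subsetP col_in_row | nCR] := boolP (VC t c \subset VR t r).
  left; exists r => i j h; case: (cross i j h) => // jc.
  by apply: col_in_row; rewrite -jc.
have [/VR_subsetP row_in_col | nRC] := boolP (VR t r \subset VC t c).
  right; left; exists c => i j h; case: (cross i j h) => // ir.
  by apply: row_in_col; rewrite -ir.
by right; right; exists r, c.
Qed.

End Boxes.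

Definition transpose_table m n (t : 'I_m -> 'I_n -> nat) : 'I_n -> 'I_m -> nat :=
  fun j i => t i j.

Definition transpose_vertex m n (t : 'I_m -> 'I_n -> nat) (x : skew_vertex t) :
    skew_vertex (transpose_table t) :=
  existT (fun p : 'I_n * 'I_m => 'I_(transpose_table t p.1 p.2))
    ((tag x).2, (tag x).1) (tagged x).

Lemma skew_adj_transpose m n (t : 'I_m -> 'I_n -> nat) (x y : skew_vertex t) :
  skew_adj (transpose_table t) (transpose_vertex x) (transpose_vertex y) =
  skew_adj t x y.
Proof. exact: andbC. Qed.

Lemma transpose_vertexK m n (t : 'I_m -> 'I_n -> nat) :
  cancel (@transpose_vertex m n t) (@transpose_vertex n m (transpose_table t)).
Proof. by case=> [[i j] k]. Qed.

Lemma transpose_disconnected m n (t : 'I_m -> 'I_n -> nat) (x y : skew_vertex t) :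
  ~~ connect (skew_adj t) x y ->
  ~~ connect (skew_adj (transpose_table t))
       (transpose_vertex x) (transpose_vertex y).
Proof.
apply: contra => /(homo_connect (f := @transpose_vertex n m (transpose_table t))).
by rewrite !transpose_vertexK; apply=> x' y'; rewrite skew_adj_transpose.
Qed.

Lemma skew_patterns_transpose m n (t : 'I_m -> 'I_n -> nat) :
  skew_patterns (transpose_table t) -> skew_patterns t.
Proof.
case=> [[j1 [j2 [i1 [i2 [j12 [i12 square]]]]]] |
        [[c row_c] | [[r col_r] | [c [r [cross [nRC nCR]]]]]]].
- left; exists i1, i2, j1, j2; do 2 split=> //.
  by move=> i j; rewrite andbC; exact: square j i.
- by right; right; left; exists c => i j; exact: row_c j i.
- by right; left; exists r => i j; exact: col_r j i.
- right; right; right; exists r, c; split; [|split].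
  + by move=> i j /(cross j i)[]; [right | left].
  + by apply: contra nCR => /VR_subsetP sub; apply/VC_subsetP.
  + by apply: contra nRC => /VC_subsetP sub; apply/VR_subsetP.
Qed.

Section SharedRow.
Variables (m n : nat) (t : 'I_m -> 'I_n -> nat) (u v : skew_vertex t).
Hypotheses (uv_row : vrow u = vrow v)
  (uv_disconnected : ~~ connect (skew_adj t) u v).

Local Notation a := (vrow u).
Local Notation b := (vcol u).
Local Notation d := (vcol v).

Lemma off_row_box_cols i j : nonempty_box t i j -> i != a -> (j == b) || (j == d).
Proof.
move=> h ia; apply: contraNT uv_disconnected; rewrite negb_or => /andP[jb jd].
apply/connectP; exists [:: box_vertex h; v] => //=.
by rewrite /skew_adj !box_vertex_row !box_vertex_col -uv_row
  !(eq_sym _ i) ia jd eq_sym jb.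
Qed.

Lemma off_row_boxes_same_row i i' :
  b != d -> nonempty_box t i b -> nonempty_box t i' d -> i != a -> i' != a -> i = i'.
Proof.
move=> bd hb hd ia i'a; apply/eqP; apply: contraNT uv_disconnected => ii'.
apply/connectP; exists [:: box_vertex hd; box_vertex hb; v] => //=.
by rewrite /skew_adj !box_vertex_row !box_vertex_col -uv_row
  (eq_sym a) i'a (eq_sym d) (eq_sym i') ii' ia bd.
Qed.

Lemma row_box_cols i j : b != d -> nonempty_box t i b -> nonempty_box t i d ->
  i != a -> nonempty_box t a j -> (j == b) || (j == d).
Proof.
move=> bd hb hd ia h; apply: contraNT uv_disconnected.
rewrite negb_or => /andP[jb jd].
apply/connectP; exists [:: box_vertex hd; box_vertex h; box_vertex hb; v] => //=.
by rewrite /skew_adj !box_vertex_row !box_vertex_col -uv_row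
  !(eq_sym a) ia bd (eq_sym d) jd jb.
Qed.

Lemma shared_row_patterns : skew_patterns t.
Proof.
have ab_box : nonempty_box t a b := vertex_box_nonempty u.
have ad_box : nonempty_box t a d by rewrite uv_row vertex_box_nonempty.
have cross_at c : (forall i j, nonempty_box t i j -> i != a -> j = c) ->
    skew_patterns t.
  move=> off; right; apply: (@cross_patterns _ _ t a c) => i j h.
  by have [-> | ia] := eqVneq i a; [left | right; exact: off h ia].
have [bd | bd] := eqVneq b d.
  by apply: (cross_at b) => i j h /(off_row_box_cols h); rewrite -bd orbb => /eqP.
have [i1 /andP[i1a i1b] | no_b] := pickP (fun i => (i != a) && nonempty_box t i b);
  last first.
  apply: (cross_at d) => i j h ia; case/orP: (off_row_box_cols h ia) => /eqP // jb.
  by have := no_b i; rewrite ia -jb h.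
have [i2 /andP[i2a i2d] | no_d] := pickP (fun i => (i != a) && nonempty_box t i d);
  last first.
  apply: (cross_at b) => i j h ia; case/orP: (off_row_box_cols h ia) => /eqP // jd.
  by have := no_d i; rewrite ia -jd h.
have i12 := off_row_boxes_same_row bd i1b i2d i1a i2a; subst i2.
move: i2d => i1d {i2a}.
left; exists a, i1, b, d; split; first by rewrite eq_sym.
split=> // i j; split=> [h | ]; last by case/andP=> /orP[]/eqP-> /orP[]/eqP->.
have [ia | ia] := eqVneq i a.
  by rewrite ia in h; rewrite (row_box_cols bd i1b i1d i1a h).
have jbd := off_row_box_cols h ia; rewrite jbd andbT /=; apply/eqP.
case/orP: jbd => /eqP jv; rewrite jv in h.
  exact: off_row_boxes_same_row bd h i1d ia i1a.
exact/esym/(off_row_boxes_same_row bd i1b h i1a ia).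
Qed.

End SharedRow.

Theorem theorem4 (m n : nat) (t : 'I_m -> 'I_n -> nat) :
  skew_disconnected t ->
  pattern_square t \/ pattern_R t \/ pattern_C t \/ pattern_RC t.
Proof.
case=> u [v uv_disconnected].
have [uv_row | uv_row] := eqVneq (vrow u) (vrow v).
  exact: shared_row_patterns uv_row uv_disconnected.
have [uv_col | uv_col] := eqVneq (vcol u) (vcol v).
  apply: skew_patterns_transpose.
  exact: (shared_row_patterns (u := transpose_vertex u) (v := transpose_vertex v))
    uv_col (transpose_disconnected uv_disconnected).
by case/negP: uv_disconnected; apply: connect1; apply/andP.
Qed.
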